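(* Let $V$ be a finite set of variables and let $D_{\mathit{dag}}$ be the ABA framework defined in the context. For each semantics $\sigma\in\{\text{complete},\text{preferred},\text{stable}\}$, $$\{(V,\{(x,y)\mid \mathit{arr}_{xy}\in S\})\mid S\in\sigma(D_{\mathit{dag}})\}=\{G\mid G \text{ is a directed acyclic graph with node set } V\}.$$
   Context: Assumption-based argumentation (ABA). An ABA framework (ABAF) is a tuple $D=(\mathcal L,\mathcal R,\mathcal A,\overline{\cdot})$ where $\mathcal L$ is a set of sentences, $\mathcal R$ is a set of rules $a_0\leftarrow a_1,\dots,a_n$ ($n\ge 0$, $a_i\in\mathcal L$; head $a_0$, body $\{a_1,\dots,a_n\}$), $\mathcal A\subseteq\mathcal L$ is a set of assumptions and $\overline{\cdot}:\mathcal A\to\mathcal L$ is the contrary function. For $S\subseteq\mathcal A$ and $q\in\mathcal L$, $S\vdash q$ if there is a finite rooted labelled tree whose root is labelled $q$, whose set of leaf labels is $S$ or $S\cup\{\top\}$, and in which every inner node is labelled $\mathrm{head}(r)$ for some $r\in\mathcal R$ and has exactly $|\mathrm{body}(r)|$ children labelled by the distinct elements of $\mathrm{body}(r)$ (or a single child $\top$ if the body is empty). $S$ attacks $T\subseteq\mathcal A$ if there are $S'\subseteq S$ and $a\in T$ with $S'\vdash\overline a$. $S$ is conflict-free if it does not attack itself; $S$ defends $T$ if $S$ attacks every set of assumptions that attacks $T$; $S$ is admissible if it is conflict-free and defends itself; complete if admissible and it contains every assumption set it defends; preferred if it is $\subseteq$-maximal among complete sets; stable if it is admissible and attacks $\{a\}$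 for every $a\in\mathcal A\setminus S$. $\sigma(D)$ denotes the set of $\sigma$-extensions. The framework $D_{\mathit{dag}}$. Let $V$ be a finite set of variables. Let $\mathcal A_{\mathit{arr}}=\{\mathit{arr}_{xy}\mid x,y\in V,x\ne y\}$ (the assumption $\mathit{arr}_{xy}$ stands for the arrow $(x,y)$), and for each unordered pair $\{x,y\}$ of distinct variables let $\mathit{noe}_{xy}=\mathit{noe}_{yx}$ be a single assumption (''no edge between $x$ and $y$''). $D_{\mathit{dag}}$ has assumptions $\mathcal A_{\mathit{dag}}=\mathcal A_{\mathit{arr}}\cup\{\mathit{noe}_{xy}\}$, each assumption $a$ has its own distinct contrary $\overline a$ (a fresh sentence), and the rules are: (i) $\overline a\leftarrow b$ for all distinct $a,b\in\{\mathit{arr}_{xy},\mathit{arr}_{yx},\mathit{noe}_{xy}\}$, for all distinct $x,y\in V$; (ii) for each sequence $x_1\dots x_k$ of variables with consecutive elements distinct and $x_1=x_k$, and each $1\le i<k$, the rule $\overline{\mathit{arr}_{x_ix_{i+1}}}\leftarrow \mathit{arr}_{x_1x_2},\dots,\mathit{arr}_{x_{k-1}x_k}$. *)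

From Stdlib Require List.
From mathcomp Require Import all_boot.
Set Implicit Arguments.
Unset Strict Implicit.
Unset Printing Implicit Defensive.

(* An ABAF (L, R, A, contrary).  Rules are given as a predicate on
   (head, body), the body being listed as a sequence (only the set of its
   elements matters).  Sets of sentences are predicates. *)
Record ABAF := {
  sent : eqType;
  rule : sent -> seq sent -> Prop;
  is_asm : sent -> Prop;
  contrary : sent -> sent             (* contrary (only used on A) *)
}.

(* Finite rooted labelled trees; label [None] stands for the symbol T (top). *)
Inductive dtree (L : Type) : Type := DNode of option L & seq (dtree L).

Definition dlabel L (t : dtree L) : option L := let: DNode l _ := t in l.
Definition dkids L (t : dtree L) : seq (dtree L) := let: DNode _ ks := t in ks.

Fixpoint dnodes L (t : dtree L) : seq (dtree L) :=
  let: DNode _ ks := t in t :: flatten (map (@dnodes L) ks).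

Definition valid_tree (D : ABAF) (t : dtree (sent D)) : Prop :=
  forall n, List.In n (dnodes t) -> dkids n <> [::] ->
    exists h body, dlabel n = Some h /\ @rule D h body /\
      (if body is [::] then map (@dlabel _) (dkids n) = [:: None]
       else uniq (map (@dlabel _) (dkids n)) /\
            forall l, l \in map (@dlabel _) (dkids n) <->
                      exists2 b, b \in body & l = Some b).

(* S |- q : there is a valid tree with root q whose set of leaf labels is
   S or S u {T}. *)
Definition derives (D : ABAF) (S : sent D -> Prop) (q : sent D) : Prop :=
  exists t : dtree (sent D),
    dlabel t = Some q /\ valid_tree t /\
    (forall a, S a <->
       exists n, [/\ List.In n (dnodes t), dkids n = [::] & dlabel n = Some a]) /\
    (forall n, List.In n (dnodes t) -> dkids n = [::] ->
       dlabel n = None \/ exists2 a, dlabel n = Some a & S a).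

Definition asm_set (D : ABAF) (S : sent D -> Prop) := forall a, S a -> @is_asm D a.
Definition subset_of (L : Type) (S T : L -> Prop) := forall a, S a -> T a.

Definition attacks (D : ABAF) (S T : sent D -> Prop) : Prop :=
  exists S', subset_of S' S /\ exists a, T a /\ derives S' (@contrary D a).

Definition conflict_free (D : ABAF) (S : sent D -> Prop) := ~ attacks S S.

Definition defends (D : ABAF) (S T : sent D -> Prop) :=
  forall U, asm_set U -> attacks U T -> attacks S U.

Definition admissible (D : ABAF) (S : sent D -> Prop) :=
  asm_set S /\ conflict_free S /\ defends S S.

Definition complete (D : ABAF) (S : sent D -> Prop) :=
  admissible S /\ forall T, asm_set T -> defends S T -> subset_of T S.

Definition preferred (D : ABAF) (S : sent D -> Prop) :=
  complete S /\ forall T, complete T -> subset_of S T -> subset_of T S.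

Definition stable (D : ABAF) (S : sent D -> Prop) :=
  admissible S /\
  forall a, @is_asm D a -> ~ S a -> attacks S (fun b => b = a).

Inductive semantics := Complete | Preferred | Stable.

Definition sigma_ext (sg : semantics) (D : ABAF) (S : sent D -> Prop) : Prop :=
  match sg with
  | Complete => complete S
  | Preferred => preferred S
  | Stable => stable S
  end.

(* Assumption names: inl (x,y) is arr_xy, inr e (e a 2-element set {x,y})
   is noe_xy = noe_yx.  A sentence is (true, a) for the assumption a
   itself, or (false, a) for its (fresh, distinct) contrary. *)
Definition dag_asm_name (V : finType) := ((V * V) + {set V})%type.
Definition dag_sent (V : finType) := (bool * dag_asm_name V)%type.

Definition arr (V : finType) (x y : V) : dag_sent V := (true, inl (x, y)).
Definition noe (V : finType) (x y : V) : dag_sent V := (true, inr [set x; y]).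
Definition dag_contrary (V : finType) (s : dag_sent V) : dag_sent V := (false, s.2).

Definition dag_is_asm (V : finType) (s : dag_sent V) : Prop :=
  (exists x y : V, x != y /\ s = arr x y) \/
  (exists x y : V, x != y /\ s = noe x y).

Definition dag_rule (V : finType) (h : dag_sent V) (body : seq (dag_sent V)) : Prop :=
  (exists x y : V, x != y /\
     exists a b, [/\ a \in [:: arr x y; arr y x; noe x y],
                     b \in [:: arr x y; arr y x; noe x y], a != b,
                     h = dag_contrary a & body = [:: b]])
  \/
  (* (ii) for x1 ... xk with consecutive elements distinct and x1 = xk,
     contrary(arr_{x_i x_{i+1}}) <- arr_{x1x2}, ..., arr_{x_{k-1}x_k} *)
  (exists (x1 : V) (p : seq V),
     [/\ path (fun a b => a != b) x1 p, last x1 p = x1,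
         body = [seq arr e.1 e.2 | e <- zip (x1 :: p) p] &
         exists2 i, i < size p &
           h = dag_contrary (arr (nth x1 (x1 :: p) i) (nth x1 (x1 :: p) i.+1))]).

Definition D_dag (V : finType) : ABAF :=
  {| sent := dag_sent V;
     rule := @dag_rule V;
     is_asm := @dag_is_asm V;
     contrary := @dag_contrary V |}.

(* A directed graph with node set V is an edge relation on V; it is
   acyclic if it has no directed cycle (self-loops included). *)
Definition acyclic (V : finType) (G : rel V) : Prop :=
  forall (x : V) (p : seq V), path G x p -> last x p = x -> p = [::].

From mathcomp Require Import all_boot.
From Stdlib Require Import Classical ClassicalEpsilon.
Set Implicit Arguments.
Unset Strict Implicit.
Unset Printing Implicit Defensive.

(** In D_dag every rule derives a contrary (a non-assumption) from assumptions,
    so derivations have depth one and a set of assumptions attacks itself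
    exactly when it contains two members of some triple
    {arr_xy, arr_yx, noe_xy} or all arrows of a directed cycle.  Hence the
    arrows of an admissible set form a DAG.  Conversely, for a DAG G the set
    of arrows of G together with noe_xy for every non-adjacent pair is
    conflict-free and meets every triple, so it attacks each assumption it
    does not contain: it is stable, hence also complete and preferred. *)

Lemma InP (T : eqType) (x : T) s : List.In x s <-> x \in s.
Proof.
elim: s => [|y s IH] //=; rewrite in_cons; split.
  by case=> [->|/IH ->]; rewrite ?eqxx ?orbT.
by case/orP=> [/eqP->|/IH]; auto.
Qed.

Lemma path_all_zip (T : Type) (e : rel T) x p :
  path e x p = all (fun u => e u.1 u.2) (zip (x :: p) p).
Proof. by elim: p x => //= y p IH x; rewrite IH. Qed.

Lemma rel_of_Prop (T : Type) (R : T -> T -> Prop) :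
  exists G : rel T, forall x y, G x y <-> R x y.
Proof.
exists (fun x y => if excluded_middle_informative (R x y) then true else false).
by move=> x y; case: excluded_middle_informative.
Qed.

Section Trees.
Variable L : eqType.

Lemma In_dnodes_kid (l : option L) ks k :
  List.In k ks -> List.In k (dnodes (DNode l ks)).
Proof.
have In_catl (s1 s2 : seq (dtree L)) : List.In k s1 -> List.In k (s1 ++ s2).
  by elim: s1 => //= y s1 IH [->|/IH]; auto.
have In_catr (s1 s2 : seq (dtree L)) : List.In k s2 -> List.In k (s1 ++ s2).
  by elim: s1 => //= y s1 IH /IH; auto.
move=> Hk; right; elim: ks Hk => //= k' ks IH [Ek|/IH/In_catr//].
by apply: In_catl; case: k' Ek => ? ? <-; left.
Qed.

Lemma kid_of_label (ks : seq (dtree L)) l :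
  l \in map (@dlabel L) ks -> exists2 k, List.In k ks & dlabel k = l.
Proof.
elim: ks => //= k ks IH; rewrite in_cons => /orP[/eqP->|/IH [k' Hk' <-]].
  by exists k; [left|].
by exists k'; [right|].
Qed.

End Trees.

Section ABA.
Variable D : ABAF.
Implicit Types S : sent D -> Prop.

Definition leaf (b : sent D) : dtree (sent D) := DNode (Some b) [::].

Lemma derives_rule h body :
  @rule D h body -> body != [::] -> @derives D (fun s => s \in body) h.
Proof.
case: body => [//|b0 bs] Hr _; set body := b0 :: bs.
set t := DNode (Some h) (map leaf (undup body)).
have Hnodes n : List.In n (dnodes t) <-> n = t \/ exists2 b, b \in body & n = leaf b.
  have -> : dnodes t = t :: map leaf (undup body).
    by congr (_ :: _); elim: (undup body) => //= b s ->.
  split=> [[<-|/List.in_map_iff [b [<- /InP]]]|[->|[b Hb ->]]]; [by left | |by left|].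
  - by rewrite mem_undup; right; exists b.
  - by right; apply/List.in_map_iff; exists b; rewrite InP mem_undup.
have Hlabels : map (@dlabel _) (dkids t) = map Some (undup body).
  by rewrite -map_comp.
have t_kids : dkids t <> [::].
  by have := mem_undup body b0; rewrite mem_head /t; case: (undup body).
exists t; split; [done | split; [|split]].
- move=> n /Hnodes [->|[b _ ->//]] _; exists h, body; split=> //; split=> //.
  rewrite Hlabels (map_inj_uniq (fun x y (E : Some x = Some y) => Some_inj E)).
  split=> [|l]; first exact: undup_uniq.
  split=> [/mapP [b Hb ->]|[b Hb ->]]; last by rewrite map_f // mem_undup.
  by exists b; rewrite // -mem_undup.
- move=> a; split=> [Ha|[n [/Hnodes [->|[b Hb ->]] Hn [<-]]]] //.
  by exists (leaf a); split=> //; apply/Hnodes; right; exists a.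
- by move=> n /Hnodes [->|[b Hb ->]] // _; right; exists b.
Qed.

(* Rule heads never occur in rule bodies, so derivation trees have depth at most one. *)
Definition shallow := forall h body b body',
  @rule D h body -> b \in body -> ~ @rule D b body'.

Lemma derives_shallow_inv S q : shallow -> derives S q -> ~ S q ->
  exists2 body, @rule D q body & forall b, b \in body -> S b.
Proof.
move=> Hsh [[l ks] [/= -> [Hvalid [_ Hleaves]]]] nSq.
have Hroot := List.in_eq (DNode (Some q) ks) (flatten (map (@dnodes _) ks)).
case: ks Hroot Hvalid Hleaves => [|k0 ks] Hroot Hvalid Hleaves.
  by case: (Hleaves _ Hroot erefl) => [//|[a [<-]]].
have [_ [body [[<-] [Hr Hkids]]]] := Hvalid _ Hroot ltac:(discriminate).
exists body => // b Hb.
case: body Hr Hkids Hb => [//|b0 bs] Hr [_ Hlabels] Hb.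
have [k Hk Ek] := kid_of_label ((Hlabels (Some b)).2 (ex_intro2 _ _ b Hb erefl)).
have Hkn := In_dnodes_kid (Some q) Hk.
case Ekk: (dkids k) => [|k1 kk].
  by case: (Hleaves k Hkn Ekk) => [|[a]]; rewrite Ek // => -[->].
have [h' [body' [Ek' [Hr' _]]]] := Hvalid k Hkn ltac:(by rewrite Ekk).
by move: Ek' Hr'; rewrite Ek => -[<-] /(Hsh _ _ _ _ Hr Hb).
Qed.

Lemma stable_complete S : stable S -> complete S.
Proof.
case=> Had Hout; split=> // T HT Hdef t Tt; apply: NNPP => nSt.
have [S' [S'S [_ [-> Hd]]]] := Hout t (HT t Tt) nSt.
have HS' : asm_set S' by move=> s /S'S; apply: Had.1.
have S'_attacks_T : attacks S' T by exists S'; split=> //; exists t.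
have [S'' [S''S [b [S'b Hb]]]] := Hdef S' HS' S'_attacks_T.
case: Had => _ [Hcf _]; apply: Hcf.
by exists S''; split=> //; exists b; split; first exact: S'S.
Qed.

Lemma stable_preferred S : stable S -> preferred S.
Proof.
move=> Hst; split; first exact: stable_complete.
case: Hst => _ Hout T [[HT [HcfT _]] _] ST t Tt; apply: NNPP => nSt.
have [S' [S'S [_ [-> Hd]]]] := Hout t (HT t Tt) nSt.
by apply: HcfT; exists S'; split; [move=> s /S'S /ST | exists t].
Qed.

Lemma stable_sigma_ext sg S : stable S -> sigma_ext sg S.
Proof.
by case: sg => /=; [exact: stable_complete | exact: stable_preferred |].
Qed.

Lemma sigma_ext_admissible sg S : sigma_ext sg S -> admissible S.
Proof. by case: sg => [[]|[[]]|[]]. Qed.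

(* An attacker of S cannot lie inside S, so it contains an outsider, which S attacks. *)
Lemma stable_of_conflict_free S : asm_set S -> conflict_free S ->
  (forall a, @is_asm D a -> ~ S a -> attacks S (fun b => b = a)) -> stable S.
Proof.
move=> HA Hcf Hout; split=> //; split=> //; split=> // U HU [U' [U'U [a [Sa Hd]]]].
have [c U'c nSc] : exists2 c, U' c & ~ S c.
  apply: NNPP => HU'S; apply: Hcf; exists U'; split; last by exists a.
  by move=> s U's; apply: NNPP => nSs; apply: HU'S; exists s.
have [S' [S'S [_ [-> Hd']]]] := Hout c (HU c (U'U c U'c)) nSc.
by exists S'; split=> //; exists c; split=> //; apply: U'U.
Qed.

End ABA.

Section Dag.
Variable V : finType.
Implicit Types (G : rel V) (S : dag_sent V -> Prop) (x y : V) (h a b c : dag_sent V).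

Lemma acyclic_irrefl G : acyclic G -> irreflexive G.
Proof.
move=> HG x; apply/negbTE/negP => Gxx.
by have := HG x [:: x]; rewrite /= Gxx => /(_ isT erefl).
Qed.

Lemma acyclic_asym G x y : acyclic G -> G x y -> ~~ G y x.
Proof.
move=> HG Gxy; apply/negP => Gyx.
by have := HG x [:: y; x]; rewrite /= Gxy Gyx => /(_ isT erefl).
Qed.

Lemma dag_rule_head h body : dag_rule h body -> h.1 = false.
Proof. by case=> [[x [y [_ [a [b [_ _ _ -> _]]]]]]|[x1 [p [_ _ _ [i _ ->]]]]]. Qed.

Lemma dag_rule_body h body b : dag_rule h body -> b \in body -> b.1.
Proof.
case=> [[x [y [_ [a [c [_ Hc _ _ ->]]]]]]|[x1 [p [_ _ -> _]]]].
  by rewrite inE => /eqP ->; move: Hc; rewrite !inE => /or3P[]/eqP->.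
by case/mapP => e _ ->.
Qed.

Lemma shallow_dag : shallow (D_dag V).
Proof.
by move=> h body b body' Hr Hb /dag_rule_head; rewrite (dag_rule_body Hr Hb).
Qed.

Lemma dag_is_asm_arr x y : dag_is_asm (arr x y) -> x != y.
Proof. by case=> -[x' [y' [+ []]]] // -> ->. Qed.

Lemma conflict_free_acyclic S G :
  @asm_set (D_dag V) S -> @conflict_free (D_dag V) S ->
  (forall x y, G x y -> S (arr x y)) -> acyclic G.
Proof.
move=> HA Hcf GS x [//|y p] Hp Hl; exfalso; apply: Hcf.
exists (fun s => s \in [seq arr e.1 e.2 | e <- zip (x :: y :: p) (y :: p)]); split.
  move=> _ /mapP [e He ->]; apply: GS.
  by move: Hp; rewrite path_all_zip => /allP; apply.
exists (arr x y); split; first by apply: GS; case/andP: Hp.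
apply: derives_rule => //; right; exists x, (y :: p); split=> //.
  by apply: sub_path Hp => a b /GS /HA /dag_is_asm_arr.
by exists 0.
Qed.

Definition dag_ext G s : Prop :=
  (exists x y, G x y /\ s = arr x y) \/
  (exists x y, [/\ x != y, ~~ G x y, ~~ G y x & s = noe x y]).

Lemma dag_ext_arr G x y : dag_ext G (arr x y) <-> G x y.
Proof.
split=> [|Gxy]; last by left; exists x, y.
by case=> [[x' [y' [+ []]]] -> -> | [? [? []]]].
Qed.

Lemma dag_ext_noe G x y : x != y ->
  dag_ext G (noe x y) <-> ~~ G x y /\ ~~ G y x.
Proof.
move=> xy; split=> [|[nGxy nGyx]]; last by right; exists x, y.
case=> [[? [? []]] // | [x' [y' [_ nGxy nGyx [Exy]]]]].
have : x \in [set x'; y'] by rewrite -Exy set21.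
have : y \in [set x'; y'] by rewrite -Exy set22.
by rewrite !in_set2 => /orP[]/eqP Ey /orP[]/eqP Ex; subst; rewrite ?eqxx in xy.
Qed.

Definition dag_triple x y : seq (dag_sent V) := [:: arr x y; arr y x; noe x y].

Lemma dag_is_asm_triple c : dag_is_asm c ->
  exists x y, x != y /\ c \in dag_triple x y.
Proof. by case=> -[x [y [xy ->]]]; exists x, y; rewrite !inE eqxx ?orbT. Qed.

Lemma derives_triple x y a b : x != y ->
  a \in dag_triple x y -> b \in dag_triple x y -> a != b ->
  @derives (D_dag V) (fun s => s \in [:: b]) (dag_contrary a).
Proof.
move=> xy Ha Hb ab; apply: derives_rule => //.
by left; exists x, y; split=> //; exists a, b.
Qed.

Lemma dag_triple_fst x y a : a \in dag_triple x y -> a.1.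
Proof. by rewrite !inE => /or3P[]/eqP->. Qed.

Lemma dag_ext_fst G a : dag_ext G a -> a.1.
Proof. by case=> [[x [y [_ ->]]]|[x [y [_ _ _ ->]]]]. Qed.

Lemma dag_contrary_inj a b : a.1 -> b.1 -> dag_contrary a = dag_contrary b -> a = b.
Proof. by case: a b => [[] ?] [[] ?] // _ _ [->]. Qed.

Lemma dag_ext_triple G x y a b : acyclic G -> x != y ->
  a \in dag_triple x y -> b \in dag_triple x y -> a != b ->
  dag_ext G a -> dag_ext G b -> False.
Proof.
move=> HG xy; rewrite !inE => /or3P[]/eqP-> /or3P[]/eqP-> //; rewrite ?eqxx // => _.
- by move=> /dag_ext_arr Gxy /dag_ext_arr; apply/negP/acyclic_asym.
- by move=> /dag_ext_arr Gxy /(dag_ext_noe _ xy) [/negP].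
- by move=> /dag_ext_arr Gyx /dag_ext_arr /(acyclic_asym HG); rewrite Gyx.
- by move=> /dag_ext_arr Gyx /(dag_ext_noe _ xy) [_ /negP].
- by move=> /(dag_ext_noe _ xy) [nGxy _] /dag_ext_arr; apply/negP.
- by move=> /(dag_ext_noe _ xy) [_ nGyx] /dag_ext_arr; apply/negP.
Qed.

Lemma dag_ext_cover G x y : x != y -> exists2 b, b \in dag_triple x y & dag_ext G b.
Proof.
move=> xy; case Gxy: (G x y).
  by exists (arr x y); rewrite ?inE ?eqxx //; apply/dag_ext_arr.
case Gyx: (G y x).
  by exists (arr y x); rewrite ?inE ?eqxx ?orbT //; apply/dag_ext_arr.
exists (noe x y); rewrite ?inE ?eqxx ?orbT //.
by apply/(dag_ext_noe _ xy); rewrite Gxy Gyx.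
Qed.

Lemma dag_ext_no_rule G a body : acyclic G -> dag_ext G a ->
  dag_rule (dag_contrary a) body -> ~ (forall b, b \in body -> dag_ext G b).
Proof.
move=> HG Ga [[x [y [xy [a' [b [Ha' Hb a'b Ea ->]]]]]]|[x1 [p [_ Hl -> [i Hi _]]]]] Hbody.
  have Eaa' := dag_contrary_inj (dag_ext_fst Ga) (dag_triple_fst Ha') Ea; subst a'.
  by apply: (dag_ext_triple HG xy Ha' Hb a'b Ga); apply: Hbody; apply: mem_head.
have Hp : path G x1 p.
  by rewrite path_all_zip; apply/allP => e He; apply/dag_ext_arr/Hbody/map_f.
by move: Hi; rewrite (HG x1 p Hp Hl).
Qed.

Lemma dag_ext_cf G : acyclic G -> @conflict_free (D_dag V) (dag_ext G).
Proof.
move=> HG [S' [S'G [a [Ga Hd]]]].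
have [|body Hr Hbody] := derives_shallow_inv shallow_dag Hd; first by move/S'G/dag_ext_fst.
by apply: (dag_ext_no_rule HG Ga Hr) => b /Hbody /S'G.
Qed.

Lemma dag_ext_asm G : acyclic G -> @asm_set (D_dag V) (dag_ext G).
Proof.
move=> HG _ [[x [y [Gxy ->]]]|[x [y [xy _ _ ->]]]]; [left|right]; exists x, y => //.
by split=> //; apply: contraTneq Gxy => ->; rewrite acyclic_irrefl.
Qed.

Lemma dag_ext_attacks_outside G c : dag_is_asm c -> ~ dag_ext G c ->
  @attacks (D_dag V) (dag_ext G) (fun b => b = c).
Proof.
move=> /dag_is_asm_triple [x [y [xy Hc]]] nGc.
have [b Hb Gb] := dag_ext_cover G xy.
exists (fun s => s \in [:: b]); split; first by move=> s; rewrite inE => /eqP ->.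
exists c; split=> //; apply: derives_triple xy Hc Hb _.
by apply/eqP => Ecb; apply: nGc; rewrite Ecb.
Qed.

Lemma dag_ext_stable G : acyclic G -> @stable (D_dag V) (dag_ext G).
Proof.
move=> HG; apply: stable_of_conflict_free.
- exact: dag_ext_asm.
- exact: dag_ext_cf.
- exact: dag_ext_attacks_outside.
Qed.

End Dag.

Theorem proposition1 (V : finType) (sg : semantics) :
  (forall S : sent (D_dag V) -> Prop, sigma_ext sg S ->
     exists G : rel V, acyclic G /\ forall x y : V, G x y <-> S (arr x y)) /\
  (forall G : rel V, acyclic G ->
     exists S : sent (D_dag V) -> Prop, sigma_ext sg S /\
       forall x y : V, G x y <-> S (arr x y)).
Proof.
split=> [S /sigma_ext_admissible [HA [Hcf _]] | G HG].
  have [G GS] := rel_of_Prop (fun x y => S (arr x y)).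
  by exists G; split=> //; apply: conflict_free_acyclic HA Hcf _ => x y /GS.
exists (dag_ext G); split; first exact/stable_sigma_ext/dag_ext_stable.
by move=> x y; rewrite dag_ext_arr.
Qed.
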